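(* Let $m=p_1^{m_1}\cdots p_k^{m_k}$ and let $(K_n,\alpha)$ be an edge-labeled complete graph over $\mathbb{Z}/m\mathbb{Z}$ with ordered edge labels $a_1,\dots,a_{r_n}$, each a positive divisor of $m$ representing a zero divisor of $\mathbb{Z}/m\mathbb{Z}$. (1) Suppose $a_{r_n}\mid a_{r_n-1}\mid\cdots\mid a_1\mid m$ and $m\ne a_1$. Let $H$ be a spanning subgraph of $K_n$ that is either the wheel with hub $v_1$ (i.e. $v_1$ is adjacent to all other vertices and $v_2,\dots,v_n$ form a cycle) or the star with central vertex $v_1$, with edge labels inherited from $(K_n,\alpha)$. Then the set consisting of $(1,\dots,1)$ and, for $j=2,\dots,n$, the vector with $a_{r_{j-1}+1}$ at $v_j$ and $0$ elsewhere, which is a minimum flow-up generating set of $[\mathbb{Z}/m\mathbb{Z}]_{(K_n,\alpha)}$, is also a minimum flow-up generating set of $[\mathbb{Z}/m\mathbb{Z}]_{(H,\alpha)}$. (2) Suppose $a_1\mid a_2\mid\cdots\mid a_{r_n}\mid m$ and $m\ne a_{r_n}$. Let $H$ be a spanning subgraph of $K_n$ that is either the wheel with hub $v_n$ or the star with central vertex $v_n$, with inherited edge labels. Then the set consisting of $(1,\dots,1)$ and, for $j=2,\dots,n$, the vector with entries $a_{r_n-(n-j)}$ at $v_j,\dots,v_n$ and $0$ at $v_1,\dots,v_{j-1}$, which is a minimum flow-up generating set of $[\mathbb{Z}/m\mathbb{Z}]_{(K_n,\alpha)}$, is also a minimum flow-up generating set of $[\mathbb{Z}/m\mathbb{Z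}]_{(H,\alpha)}$.
   Context: A spline on an edge-labeled graph $(G,\alpha)$ over $\mathbb{Z}/m\mathbb{Z}$ (edges labeled by nonzero ideals) is a vector $(f_{v_1},\dots,f_{v_n})\in(\mathbb{Z}/m\mathbb{Z})^n$ with $f_{v_i}-f_{v_j}\in\alpha(v_iv_j)$ for every edge; the splines form a $\mathbb{Z}$-module $[\mathbb{Z}/m\mathbb{Z}]_{(G,\alpha)}$. An $i$-th flow-up class is a spline with $f_{v_i}\ne0$ and $f_{v_t}=0$ for $t<i$. A minimum flow-up generating set is a generating set of the $\mathbb{Z}$-module of smallest possible size consisting of flow-up classes. $K_n$ is the complete graph on $v_1,\dots,v_n$; $r_k=k(k-1)/2$; for $1\le j<k\le n$ the edge $v_jv_k$ is $e_{r_{k-1}+j}$. ''Ordered edge labels $a_1,\dots,a_{r_n}$'' means $\alpha(e_s)$ is the ideal generated by $a_s+m\mathbb{Z}$. *)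

From HB Require Import structures.
From mathcomp Require Import all_boot all_order all_algebra.
Set Implicit Arguments. Unset Strict Implicit. Unset Printing Implicit Defensive.
Import Order.TTheory GRing.Theory Num.Theory.
Local Open Scope ring_scope.

Definition rr (k : nat) : nat := (k * k.-1) %/ 2.

(* Vertices v_1..v_n are represented 0-based by i : 'I_n (v_{i+1}).
   Ordered edge labels a_1 .. a_{r_n} are given by a : nat -> nat (1-based).
   For 1 <= j < k <= n, edge v_j v_k is e_{r_{k-1}+j}; in 0-based indices
   i < k this is index rr k + i + 1. *)
Definition edge_label (n : nat) (a : nat -> nat) (i k : 'I_n) : nat :=
  if (i < k)%N then a (rr k + i + 1)%N else a (rr i + k + 1)%N.

Definition in_ideal (m : nat) (b : nat) (x : 'Z_m) : Prop :=
  exists c : 'Z_m, x = c * (b%:R).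

Definition is_spline (m n : nat) (E : rel 'I_n) (a : nat -> nat)
  (f : {ffun 'I_n -> 'Z_m}) : Prop :=
  forall i k : 'I_n, i != k -> E i k -> in_ideal (edge_label a i k) (f i - f k).

Definition complete_graph (n : nat) : rel 'I_n := fun i k => i != k.

Definition star_graph (n : nat) (h : nat) : rel 'I_n :=
  fun i k => (i != k) && ((val i == h) || (val k == h)).

(* wheel with hub v_1 (index 0); rim cycle v_2 ... v_n (indices 1..n-1) *)
Definition wheel_first (n : nat) : rel 'I_n :=
  fun i k => (i != k) &&
    [|| val i == 0%N, val k == 0%N,
        (0 < val i)%N && (0 < val k)%N && (((val i).+1 == val k) || ((val k).+1 == val i)),
        (val i == 1%N) && (val k == n.-1) | (val k == 1%N) && (val i == n.-1)].

(* wheel with hub v_n (index n-1); rim cycle v_1 ... v_{n-1} (indices 0..n-2) *)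
Definition wheel_last (n : nat) : rel 'I_n :=
  fun i k => (i != k) &&
    [|| val i == n.-1, val k == n.-1,
        (val i < n.-1)%N && (val k < n.-1)%N && (((val i).+1 == val k) || ((val k).+1 == val i)),
        (val i == 0%N) && (val k == n.-2) | (val k == 0%N) && (val i == n.-2)].

Definition flow_up_at (m n : nat) (i : 'I_n) (f : {ffun 'I_n -> 'Z_m}) : Prop :=
  f i != 0 /\ forall t : 'I_n, (t < i)%N -> f t = 0.

Definition is_flow_up (m n : nat) (f : {ffun 'I_n -> 'Z_m}) : Prop :=
  exists i : 'I_n, flow_up_at i f.

Definition generates (m n : nat) (E : rel 'I_n) (a : nat -> nat)
  (S : {set {ffun 'I_n -> 'Z_m}}) : Prop :=
  (forall g, g \in S -> is_spline E a g) /\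
  forall f, is_spline E a f ->
    exists c : {ffun 'I_n -> 'Z_m} -> int, f = \sum_(g in S) g *~ c g.

Definition flow_up_generating_set (m n : nat) (E : rel 'I_n) (a : nat -> nat)
  (S : {set {ffun 'I_n -> 'Z_m}}) : Prop :=
  generates E a S /\ forall g, g \in S -> is_flow_up g.

Definition min_flow_up_generating_set (m n : nat) (E : rel 'I_n) (a : nat -> nat)
  (S : {set {ffun 'I_n -> 'Z_m}}) : Prop :=
  flow_up_generating_set E a S /\
  forall T : {set {ffun 'I_n -> 'Z_m}}, flow_up_generating_set E a T -> (#|S| <= #|T|)%N.

Definition gens_decreasing (m n : nat) (a : nat -> nat) : {set {ffun 'I_n -> 'Z_m}} :=
  [set [ffun _ => 1]] :|:
  [set [ffun t : 'I_n => if t == j then (a (rr j + 1)%N)%:R else 0] | j : 'I_n & (0 < val j)%N].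

Definition gens_increasing (m n : nat) (a : nat -> nat) : {set {ffun 'I_n -> 'Z_m}} :=
  [set [ffun _ => 1]] :|:
  [set [ffun t : 'I_n => if (val j <= val t)%N then (a (rr n - (n - (val j).+1))%N)%:R else 0]
     | j : 'I_n & (0 < val j)%N].

From HB Require Import structures.
From mathcomp Require Import all_boot all_order all_algebra.
From mathcomp Require Import zify.
From mathcomp.algebra_tactics Require Import ring.
Set Implicit Arguments. Unset Strict Implicit. Unset Printing Implicit Defensive.
Import Order.TTheory GRing.Theory Num.Theory.
Local Open Scope ring_scope.

(* Let pr i be the hub v_1 for the first family and v_{i-1} for the second.  The backward
   difference bdiff f = (f_1, f_i - f_(pr i) for i > 1) is injective and additive, and maps the
   j-th proposed generator to lead_j e_j, where lead_j is the label of the edge joining v_j or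
   v_(j-1) to the hub (and lead_1 = 1).  On any graph containing the hub edges, every spline f
   has bdiff f_i in (lead_i); conversely the divisibility chain makes each generator a spline
   even on K_n.  Hence the n generators span the splines, and they are flow-up classes.
   For minimality let p = m / a_1 (resp. m / a_(r_n)), so p > 1 and lead_i p | m.  Rescaling
   the i-th coordinate of bdiff by m / (lead_i p) maps the splines onto ((m/p) Z/mZ)^n, a group
   of order p^n killed by p; the images of a generating set T span it with coefficients in
   [0, p), so p^n <= p^|T|. *)

(* Not declared by MathComp: needed to count subsets of (Z/mZ)^n. *)
HB.instance Definition _ (aT : finType) (rT : finZmodType) :=
  GRing.Zmodule.on {ffun aT -> rT}.

Lemma rr_bin2 k : rr k = 'C(k, 2).
Proof. by rewrite bin2 /rr divn2. Qed.

Lemma rrS k : rr k.+1 = (rr k + k)%N.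
Proof. by rewrite !rr_bin2 binS bin1 addnC. Qed.

Lemma leq_rr i j : (i <= j)%N -> (rr i <= rr j)%N.
Proof. by rewrite !rr_bin2; apply: leq_bin2l. Qed.

Definition edge_index (i k : nat) : nat :=
  if (i < k)%N then (rr k + i + 1)%N else (rr i + k + 1)%N.

Lemma edge_labelE n a (i k : 'I_n) : edge_label a i k = a (edge_index i k).
Proof. by rewrite /edge_label /edge_index; case: ifP. Qed.

Lemma edge_label_sym n a (i k : 'I_n) : edge_label a i k = edge_label a k i.
Proof. by rewrite /edge_label; case: ltngtP => // ->. Qed.

Lemma edge_index_bounds N (i k : nat) : (i < N)%N -> (k < N)%N -> i != k ->
  (rr i + 1 <= edge_index i k <= rr N)%N.
Proof.
move=> iN kN; rewrite /edge_index; case: ltngtP => [ik|ki|->]; last by [].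
  by have := leq_rr kN; have := leq_rr ik; rewrite !rrS; lia.
by have := leq_rr iN; rewrite rrS; lia.
Qed.

Lemma divn_gt1 d m : (0 < m)%N -> (d %| m)%N -> m != d -> (1 < m %/ d)%N.
Proof.
move=> m_gt0 /divnK m_eq m_neq; move: m_eq m_neq m_gt0.
by case: (m %/ d)%N => [|[|q]] // <-; rewrite ?mul0n ?mul1n ?eqxx.
Qed.

Lemma dvdn_mul_divn d c m : (d %| c)%N -> (c %| m)%N -> (d * (m %/ c) %| m)%N.
Proof. by move=> dc cm; rewrite -{2}(divnK cm) mulnC dvdn_mul. Qed.

Lemma homo_leq_interval (r : nat -> nat -> Prop) (a : nat -> nat) (R : nat) :
  (forall x, r x x) -> (forall y x z, r x y -> r y z -> r x z) ->
  (forall s, (0 < s < R)%N -> r (a s) (a s.+1)) ->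
  forall s t, (0 < s)%N -> (s <= t <= R)%N -> r (a s) (a t).
Proof.
move=> r_refl r_trans a_step s t s_gt0 /andP[st tR].
pose D := [pred s | 0 < s <= R]%N.
have D_convex : {in D &, forall i j k, i < k < j -> k \in D}%N.
  move=> i j; rewrite !inE => /andP[i0 iR] /andP[j0 jR] k /andP[ik kj].
  by rewrite inE; lia.
apply: (homo_leq_in r_refl r_trans D_convex) => //; rewrite ?inE; try lia.
by move=> i; rewrite !inE => /andP[i_gt0 _] /andP[_ iR]; apply: a_step; lia.
Qed.

Lemma ord_gt0 n (i : 'I_n.+1) : (0 < i)%N = (i != ord0).
Proof. by rewrite lt0n -val_eqE. Qed.

Lemma setU1_imset_ord0 (T : finType) n (x : T) (F : 'I_n.+1 -> T) :
  [set x] :|: [set F j | j : 'I_n.+1 & (0 < val j)%N] =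
  [set (if j == ord0 then x else F j) | j : 'I_n.+1].
Proof.
apply/setP => y; rewrite in_setU in_set1; apply/orP/imsetP => [[/eqP->|/imsetP[j]]|[j _ ->]].
- by exists ord0; rewrite ?eqxx.
- rewrite inE => j_gt0 ->; exists j => //.
  by rewrite ifN // -ord_gt0.
case: (eqVneq j ord0) => [_|j0]; [by left | right].
by apply/imsetP; exists j; rewrite // inE ord_gt0.
Qed.

Lemma Zp_nat_inj m x y : (1 < m)%N -> (x < m)%N -> (y < m)%N ->
  x%:R = y%:R :> 'Z_m -> x = y.
Proof. by move=> m_gt1 xm ym /(congr1 val); rewrite /= !val_Zp_nat // !modn_small. Qed.

Lemma Zp_nat_eq0 m x : (1 < m)%N -> (x < m)%N -> (x%:R == 0 :> 'Z_m) = (x == 0)%N.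
Proof.
move=> m_gt1 xm; apply/eqP/eqP => [|->] //.
exact: (Zp_nat_inj m_gt1 xm (ltnW m_gt1)).
Qed.

Lemma card_le_torsion_combinations (I : finType) (V : finZmodType) (S : {set I})
    (x : I -> V) (p : nat) (A : {set V}) :
  (0 < p)%N -> (forall i, i \in S -> x i *+ p = 0) ->
  (forall v, v \in A -> exists c : I -> int, v = \sum_(i in S) x i *~ c i) ->
  (#|A| <= p ^ #|S|)%N.
Proof.
move=> p_gt0 x_tors A_comb.
pose comb (k : {ffun 'I_#|S| -> 'I_p}) := \sum_(j < #|S|) x (enum_val j) *+ k j.
suff /subset_leq_card A_le : A \subset [set comb k | k in setT].
  apply: leq_trans A_le _; apply: leq_trans (leq_imset_card _ _) _.
  by rewrite cardsT card_ffun !card_ord.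
apply/subsetP => v /A_comb[c ->].
have p_neq0 : p%:Z != 0 by rewrite eqz_nat -lt0n.
have c_mod (j : 'I_#|S|) : (`|(c (enum_val j) %% p)%Z| < p)%N.
  by rewrite -ltz_nat gez0_abs ?modz_ge0 ?ltz_pmod.
apply/imsetP; exists [ffun j => Ordinal (c_mod j)]; first by rewrite inE.
rewrite (big_enum_val (fun i => x i *~ c i)) /comb; apply: eq_bigr => j _.
have x_tors_z : x (enum_val j) *~ p = 0 by rewrite -pmulrn x_tors ?enum_valP.
rewrite ffunE /= {1}(divz_eq (c (enum_val j)) p) mulrzDr mulrzA mulrzAC x_tors_z.
by rewrite mul0rz add0r pmulrn gez0_abs ?modz_ge0.
Qed.

Section Ideals.
Variable m : nat.
Implicit Types (b d : nat) (x y : 'Z_m).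

Lemma in_ideal0 b : in_ideal b (0 : 'Z_m).
Proof. by exists 0; rewrite mul0r. Qed.

Lemma in_idealD b x y : in_ideal b x -> in_ideal b y -> in_ideal b (x + y).
Proof. by move=> [c ->] [d ->]; exists (c + d); rewrite mulrDl. Qed.

Lemma in_idealN b x : in_ideal b x -> in_ideal b (- x).
Proof. by move=> [c ->]; exists (- c); rewrite mulNr. Qed.

Lemma in_idealB b x y : in_ideal b x -> in_ideal b y -> in_ideal b (x - y).
Proof. by move=> bx /in_idealN; apply: in_idealD. Qed.

Lemma in_idealMz b x z : in_ideal b x -> in_ideal b (x *~ z).
Proof. by move=> [c ->]; exists (c *~ z); rewrite mulrzAl. Qed.

Lemma in_ideal_natr b : in_ideal b (b%:R : 'Z_m).
Proof. by exists 1; rewrite mul1r. Qed.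

Lemma in_ideal1 x : in_ideal 1 x.
Proof. by exists x; rewrite mulr1. Qed.

Lemma in_ideal_dvd d b x : (d %| b)%N -> in_ideal b x -> in_ideal d x.
Proof. by move=> /dvdnP[q ->] [c ->]; exists (c * q%:R); rewrite natrM mulrA. Qed.

End Ideals.

Section Splines.
Variables (m n : nat) (E : rel 'I_n) (a : nat -> nat).
Local Notation spline := (@is_spline m n E a).
Implicit Types f : {ffun 'I_n -> 'Z_m}.

Lemma spline_of_complete f : is_spline (@complete_graph n) a f -> spline f.
Proof. by move=> f_spline i k ik _; apply: f_spline. Qed.

Lemma spline_sum_mulz (I : finType) (g : I -> {ffun 'I_n -> 'Z_m}) (c : I -> int) :
  (forall j, spline (g j)) -> spline (\sum_j g j *~ c j).
Proof.
move=> g_spline i k ik e; rewrite !sum_ffunE -sumrB.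
apply: (big_ind (in_ideal _)); [exact: in_ideal0 | exact: in_idealD |].
by move=> j _; rewrite !ffunMzE -mulrzBl; apply/in_idealMz/g_spline.
Qed.

Lemma spline_cst x : spline [ffun _ => x].
Proof. by move=> i k _ _; rewrite !ffunE subrr; apply: in_ideal0. Qed.

Lemma spline_single (j : 'I_n) x :
  (forall k, k != j -> in_ideal (edge_label a j k) x) ->
  spline [ffun t => if t == j then x else 0].
Proof.
move=> x_in i k; rewrite !ffunE.
case: (eqVneq i j) => [->|ij]; case: (eqVneq k j) => [->|kj] ik _.
- by [].
- by rewrite subr0; apply: x_in.
- by rewrite sub0r edge_label_sym; apply/in_idealN/x_in.
- by rewrite subrr; apply: in_ideal0.
Qed.

Lemma spline_step (j : nat) x :
  (forall s t : 'I_n, (s < j <= t)%N -> in_ideal (edge_label a s t) x) ->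
  spline [ffun t : 'I_n => if (j <= t)%N then x else 0].
Proof.
move=> x_in i k _ _; rewrite !ffunE.
case: (leqP j i) => ji; case: (leqP j k) => jk.
- by rewrite subrr; apply: in_ideal0.
- by rewrite subr0 edge_label_sym; apply: x_in; rewrite jk ji.
- by rewrite sub0r; apply/in_idealN/x_in; rewrite ji jk.
- by rewrite subrr; apply: in_ideal0.
Qed.

End Splines.

Section BackwardDifference.
Variables (R : zmodType) (n : nat) (pr : 'I_n -> 'I_n).
Hypothesis pr_lt : forall i : 'I_n, (0 < i)%N -> (pr i < i)%N.
Implicit Types f g : {ffun 'I_n -> R}.

Definition bdiff f : {ffun 'I_n -> R} :=
  [ffun i : 'I_n => if (0 < i)%N then f i - f (pr i) else f i].

Lemma bdiff_is_zmod_morphism : zmod_morphism bdiff.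
Proof.
move=> f g; apply/ffunP => i; rewrite !ffunE.
by case: ifP => _; rewrite ?ffunE // !opprD !opprK addrACA.
Qed.

HB.instance Definition _ := GRing.isZmodMorphism.Build _ _ bdiff bdiff_is_zmod_morphism.

Lemma bdiff_eq0_prefix f (k : nat) :
  (forall i : 'I_n, (i < k)%N -> bdiff f i = 0) ->
  forall i : 'I_n, (i < k)%N -> f i = 0.
Proof.
elim: k => // k IH bdiff0 i; rewrite ltnS leq_eqVlt => /orP[/eqP ik|]; last first.
  by apply: IH => j jk; apply: bdiff0; apply: ltnW.
have f_lt (j : 'I_n) : (j < i)%N -> f j = 0 by rewrite ik; apply: IH => l lk; apply/bdiff0/ltnW.
have := bdiff0 i; rewrite ffunE ik ltnSn => /(_ isT).
by case: ifP => [i_gt0|//]; rewrite (f_lt (pr i)) ?subr0 // pr_lt ?ik.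
Qed.

Lemma bdiff_inj : injective bdiff.
Proof.
move=> f g fg; apply/ffunP => i; apply/eqP; rewrite -subr_eq0; apply/eqP.
have fg0 (j : 'I_n) : (j < n)%N -> bdiff (f - g) j = 0.
  by rewrite raddfB /= fg subrr ffunE.
by move: (bdiff_eq0_prefix fg0 (ltn_ord i)); rewrite !ffunE.
Qed.

End BackwardDifference.

Section FlowUpBasis.
Variables (m n : nat) (E : rel 'I_n) (a : nat -> nat).
Variables (pr : 'I_n -> 'I_n) (lead : 'I_n -> nat) (gen : 'I_n -> {ffun 'I_n -> 'Z_m}).
Variable p : nat.
Local Notation FF := {ffun 'I_n -> 'Z_m}.
Local Notation spline := (@is_spline m n E a).
Local Notation bdiff := (bdiff pr).

Hypotheses (m_gt1 : (1 < m)%N) (p_gt1 : (1 < p)%N).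
Hypothesis pr_lt : forall i : 'I_n, (0 < i)%N -> (pr i < i)%N.
Hypothesis lead_gt0 : forall i, (0 < lead i)%N.
Hypothesis lead_p_dvd : forall i, (lead i * p %| m)%N.
Hypothesis gen_spline : forall j, spline (gen j).
Hypothesis bdiff_gen : forall j, bdiff (gen j) = [ffun i => if i == j then (lead j)%:R else 0].
Hypothesis spline_bdiff : forall f, spline f -> forall i, in_ideal (lead i) (bdiff f i).

Lemma lead_neq0 i : (lead i)%:R != 0 :> 'Z_m.
Proof.
have lead_lt : (lead i < m)%N.
  by apply: leq_trans (dvdn_leq (ltnW m_gt1) (lead_p_dvd i)); rewrite ltn_Pmulr.
by rewrite Zp_nat_eq0 // -lt0n lead_gt0.
Qed.

Lemma bdiff_gen_comb (c : 'I_n -> int) :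
  bdiff (\sum_j gen j *~ c j) = [ffun i => (lead i)%:R *~ c i].
Proof.
apply/ffunP => i; rewrite raddf_sum sum_ffunE (bigD1 i) //= big1 => [|j ji].
  by rewrite raddfMz /= ffunMzE bdiff_gen !ffunE eqxx addr0.
by rewrite raddfMz /= ffunMzE bdiff_gen ffunE eq_sym (negbTE ji) mul0rz.
Qed.

Lemma flow_up_gen j : flow_up_at j (gen j).
Proof.
have gen_lt : forall t : 'I_n, (t < j)%N -> gen j t = 0.
  by apply: (bdiff_eq0_prefix pr_lt) => t tj; rewrite bdiff_gen ffunE -val_eqE /= ltn_eqF.
split=> //; have /ffunP/(_ j) := bdiff_gen j; rewrite !ffunE eqxx.
case: ifP => [j_gt0|_ ->]; last exact: lead_neq0.
by rewrite (gen_lt (pr j)) ?pr_lt // subr0 => ->; apply: lead_neq0.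
Qed.

Lemma gen_inj : injective gen.
Proof.
move=> j k gen_jk; apply/eqP/negP => /negP jk.
have := congr1 (fun f => bdiff f j) gen_jk; rewrite !bdiff_gen !ffunE eqxx (negbTE jk).
by move/eqP; rewrite (negbTE (lead_neq0 j)).
Qed.

Lemma spline_eq_gen_comb f : spline f -> exists c : 'I_n -> int, f = \sum_j gen j *~ c j.
Proof.
move=> /spline_bdiff/fin_all_exists[d fd].
exists (fun j => Posz (d j)); apply: (bdiff_inj pr_lt).
rewrite bdiff_gen_comb; apply/ffunP => i.
by rewrite fd ffunE -mulrzr mulrC; congr (_ * _); apply/esym/natr_Zp.
Qed.

Lemma generates_gen : generates E a [set gen j | j : 'I_n].
Proof.
split=> [_ /imsetP[j _ ->] // | f /spline_eq_gen_comb[c ->]].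
exists (fun g => \sum_(j | gen j == g) c j).
rewrite big_imset /=; last by move=> j k _ _; apply: gen_inj.
apply: eq_big => [j|j _]; first by rewrite inE.
by rewrite (eq_bigl (pred1 j)) => [|k]; [rewrite big_pred1_eq | rewrite /= (inj_eq gen_inj)].
Qed.

(* The weight m / (lead i * p) sends (lead i) onto (m/p) Z/mZ, which has exponent p. *)
Definition scaled_bdiff (f : FF) : FF := [ffun i => bdiff f i * (m %/ (lead i * p))%:R].

Lemma scaled_bdiff_is_zmod_morphism : zmod_morphism scaled_bdiff.
Proof. by move=> f g; apply/ffunP => i; rewrite !ffunE; case: ifP => _; ring. Qed.

HB.instance Definition _ :=
  GRing.isZmodMorphism.Build _ _ scaled_bdiff scaled_bdiff_is_zmod_morphism.

Lemma scaled_bdiff_torsion f : spline f -> scaled_bdiff f *+ p = 0.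
Proof.
move=> f_spline; apply/ffunP => i; have [c fc] := spline_bdiff f_spline i.
rewrite ffunMnE [scaled_bdiff f i]ffunE fc ffunE.
rewrite -mulrA -natrM -mulrnAr -mulr_natr -natrM.
by rewrite mulnAC mulnC divnK // pchar_Zp // mulr0.
Qed.

Lemma scaled_bdiff_gen_comb (k : 'I_n -> nat) :
  scaled_bdiff (\sum_j gen j *~ (k j)%:Z) = [ffun i => (k i * (m %/ p))%:R].
Proof.
apply/ffunP => i; rewrite ffunE bdiff_gen_comb !ffunE -pmulrn -mulrnA -natrM.
congr (_%:R); have -> : (m %/ p = m %/ (lead i * p) * lead i)%N.
  by rewrite -{1}(divnK (lead_p_dvd i)) mulnA mulnK // ltnW.
by rewrite -mulnA mulnCA [(lead i * _)%N]mulnC.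
Qed.

Lemma flow_up_generating_card_ge (T : {set FF}) : flow_up_generating_set E a T -> (n <= #|T|)%N.
Proof.
move=> [[T_spline T_gen] _]; have p_gt0 : (0 < p)%N := ltnW p_gt1.
pose vec (k : {ffun 'I_n -> 'I_p}) : FF := [ffun i => (k i * (m %/ p))%:R].
have vec_inj : injective vec.
  move=> k k' /ffunP kk'; apply/ffunP => i; move: (kk' i); rewrite !ffunE.
  have p_dvd : (p %| m)%N := dvdn_trans (dvdn_mull _ (dvdnn p)) (lead_p_dvd i).
  have mp_gt0 : (0 < m %/ p)%N by rewrite divn_gt0 // dvdn_leq // ltnW.
  have lt_m (x : 'I_p) : (x * (m %/ p) < m)%N.
    by rewrite -{2}(divnK p_dvd) [(_ %/ _ * _)%N]mulnC ltn_pmul2r.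
  move/Zp_nat_inj => /(_ m_gt1 (lt_m _) (lt_m _))/eqP.
  by rewrite eqn_pmul2r // => /eqP/val_inj.
have := card_le_torsion_combinations (x := scaled_bdiff) (S := T)
  (A := [set vec k | k in setT]) p_gt0.
rewrite card_imset // cardsT card_ffun !card_ord leq_exp2l //; apply.
  by move=> g /T_spline/scaled_bdiff_torsion.
move=> _ /imsetP[k _ ->].
have [c sum_c] := T_gen _ (spline_sum_mulz (fun j => (k j : nat)%:Z) gen_spline).
exists c; rewrite /vec -(scaled_bdiff_gen_comb (fun j => k j : nat)) sum_c raddf_sum.
by apply: eq_bigr => g _; rewrite raddfMz.
Qed.

Theorem min_flow_up_generating_gen : min_flow_up_generating_set E a [set gen j | j : 'I_n].
Proof.
split.
  split; first exact: generates_gen.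
  by move=> _ /imsetP[j _ ->]; exists j; apply: flow_up_gen.
move=> T /flow_up_generating_card_ge; apply: leq_trans.
by rewrite card_imset ?cardsT ?card_ord //; apply: gen_inj.
Qed.

End FlowUpBasis.

Section HubFirst.
Variables (m n : nat) (a : nat -> nat) (E : rel 'I_n.+1).
Hypothesis m_gt1 : (1 < m)%N.
Hypothesis a_gt0 : forall s, (0 < s <= rr n.+1)%N -> (0 < a s)%N.
Hypothesis a_dec : forall s, (0 < s < rr n.+1)%N -> (a s.+1 %| a s)%N.
Hypotheses (a1_dvd : (a 1 %| m)%N) (a1_neq : m != a 1).
Hypothesis E_hub : forall j : 'I_n.+1, j != ord0 -> E j ord0.

Let lead (i : 'I_n.+1) : nat := if i == ord0 then 1%N else a (rr i + 1).

Let gen (j : 'I_n.+1) : {ffun 'I_n.+1 -> 'Z_m} :=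
  if j == ord0 then [ffun _ => 1]
  else [ffun t => if t == j then (a (rr j + 1))%:R else 0].

Lemma dvdn_first s t : (0 < s)%N -> (s <= t <= rr n.+1)%N -> (a t %| a s)%N.
Proof.
move: s t; apply: (homo_leq_interval (r := fun x y => (y %| x)%N)) a_dec => // y x z.
by move=> /[swap]; apply: dvdn_trans.
Qed.

Lemma dvdn_first_label (j k : 'I_n.+1) : j != k -> (edge_label a j k %| a (rr j + 1))%N.
Proof.
move=> jk; rewrite edge_labelE.
have /andP[lo hi] := edge_index_bounds (ltn_ord j) (ltn_ord k) jk.
by apply: dvdn_first; rewrite ?lo ?hi ?addn1.
Qed.

Lemma first_index_le (i : 'I_n.+1) : i != ord0 -> (rr i + 1 <= rr n.+1)%N.
Proof. by rewrite -ord_gt0 => i_gt0; have := leq_rr (ltn_ord i); rewrite rrS; lia. Qed.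

Lemma lead_dvd_a1 i : (lead i %| a 1)%N.
Proof.
rewrite /lead; case: eqP => // /eqP /first_index_le i_le.
by apply: dvdn_first; rewrite // i_le addn1.
Qed.

Lemma gens_decreasing_min : min_flow_up_generating_set E a (@gens_decreasing m n.+1 a).
Proof.
rewrite /gens_decreasing setU1_imset_ord0.
apply: (min_flow_up_generating_gen (pr := fun=> ord0) (lead := lead) (p := m %/ a 1)) => //.
- by rewrite divn_gt1 // ltnW.
- move=> i; rewrite /lead; case: ifP => // /negbT /first_index_le i_le.
  by apply: a_gt0; rewrite i_le addn1.
- by move=> i; apply: dvdn_mul_divn (lead_dvd_a1 i) a1_dvd.
- move=> j; apply: spline_of_complete; rewrite /gen; case: ifP => [_|/negbT j0].
    exact: spline_cst.
  apply: spline_single => k kj.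
  by apply/in_ideal_dvd/in_ideal_natr/dvdn_first_label; rewrite eq_sym.
- move=> j; apply/ffunP => i; rewrite /gen /lead !ffunE ord_gt0.
  case: (eqVneq j ord0) => [->|j0]; case: (eqVneq i ord0) => [->|i0] /=; rewrite !ffunE ?eqxx //.
  + by rewrite subrr.
  + by rewrite (eq_sym ord0) (negbTE j0) subr0.
- move=> f f_spline i; rewrite ffunE /lead ord_gt0; case: eqP => [->|/eqP i0].
    exact: in_ideal1.
  by have := f_spline i ord0 i0 (E_hub i0); rewrite /edge_label ltn0 addn0.
Qed.

End HubFirst.

Section HubLast.
Variables (m n : nat) (a : nat -> nat) (E : rel 'I_n.+1).
Hypothesis m_gt1 : (1 < m)%N.
Hypothesis a_gt0 : forall s, (0 < s <= rr n.+1)%N -> (0 < a s)%N.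
Hypothesis a_inc : forall s, (0 < s < rr n.+1)%N -> (a s %| a s.+1)%N.
Hypotheses (alast_dvd : (a (rr n.+1) %| m)%N) (alast_neq : m != a (rr n.+1)).
Hypothesis E_hub : forall j : 'I_n.+1, j != ord_max -> E j ord_max.

Let lead (i : 'I_n.+1) : nat := if i == ord0 then 1%N else a (rr n + i).

Let gen (j : 'I_n.+1) : {ffun 'I_n.+1 -> 'Z_m} :=
  if j == ord0 then [ffun _ => 1]
  else [ffun t : 'I_n.+1 => if (val j <= val t)%N
                            then (a (rr n.+1 - (n.+1 - (val j).+1)))%:R else 0].

Let pr (i : 'I_n.+1) : 'I_n.+1 := inord i.-1.

Lemma last_index (j : 'I_n.+1) : (rr n.+1 - (n.+1 - j.+1) = rr n + j)%N.
Proof. by have := ltn_ord j; rewrite rrS; lia. Qed.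

Lemma last_index_bounds (i : 'I_n.+1) : i != ord0 -> (0 < rr n + i <= rr n.+1)%N.
Proof. by rewrite -ord_gt0 rrS => i_gt0; have := ltn_ord i; lia. Qed.

Lemma dvdn_last s t : (0 < s)%N -> (s <= t <= rr n.+1)%N -> (a s %| a t)%N.
Proof. exact: (homo_leq_interval dvdnn dvdn_trans a_inc). Qed.

Lemma val_pr (i : 'I_n.+1) : (pr i : nat) = i.-1.
Proof. by rewrite inordK // (leq_ltn_trans (leq_pred _) (ltn_ord i)). Qed.

Lemma ltn_ord_max (i : 'I_n.+1) : (i < n)%N = (i != ord_max).
Proof. by rewrite ltn_neqAle -ltnS ltn_ord andbT -val_eqE. Qed.

Lemma last_label (i : 'I_n.+1) : i != ord_max -> edge_label a i ord_max = a (rr n + i.+1).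
Proof. by rewrite -ltn_ord_max /edge_label /= => ->; rewrite addn1 addnS. Qed.

Lemma gens_increasing_min : min_flow_up_generating_set E a (@gens_increasing m n.+1 a).
Proof.
rewrite /gens_increasing setU1_imset_ord0.
apply: (min_flow_up_generating_gen (pr := pr) (lead := lead) (p := m %/ a (rr n.+1))) => //.
- by rewrite divn_gt1 // ltnW.
- by move=> i i_gt0; rewrite val_pr ltn_predL.
- by move=> i; rewrite /lead; case: ifP => // /negbT /last_index_bounds; apply: a_gt0.
- move=> i; apply: dvdn_mul_divn alast_dvd; rewrite /lead; case: ifP => // /negbT i0.
  by have /andP[lo hi] := last_index_bounds i0; apply: dvdn_last; rewrite // hi leqnn.
- move=> j; apply: spline_of_complete; rewrite /gen; case: ifP => [_|/negbT j0].
    exact: spline_cst.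
  apply: spline_step => s t /andP[sj jt]; apply/in_ideal_dvd/in_ideal_natr.
  rewrite /edge_label (leq_trans sj jt) last_index.
  have rr_t : (rr t <= rr n)%N by apply: leq_rr; rewrite -ltnS.
  by apply: dvdn_last; [rewrite addn1 | move: sj jt (ltn_ord j); rewrite rrS /=; lia].
- move=> j; apply/ffunP => i; rewrite /gen /lead !ffunE ord_gt0.
  case: (eqVneq j ord0) => [->|j0]; case: (eqVneq i ord0) => [->|i0] /=; rewrite !ffunE ?eqxx //.
  + by rewrite subrr.
  + by rewrite leqn0 (eq_sym ord0) -[_ == 0%N]/(j == ord0) (negbTE j0).
  + have j_gt0 : (0 < j)%N by rewrite ord_gt0.
    rewrite val_pr last_index; case: (eqVneq i j) => [->|ij].
      by rewrite leqnn leqNgt ltn_predL j_gt0 subr0.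
    have i_gt0 : (0 < i)%N by rewrite ord_gt0.
    rewrite -val_eqE /= in ij.
    have -> : (j <= i.-1)%N = (j <= i)%N by apply/idP/idP; move: ij i_gt0; lia.
    by rewrite subrr.
- move=> f f_spline i; rewrite ffunE /lead ord_gt0; case: eqP => [->|/eqP i0].
    exact: in_ideal1.
  have i_gt0 : (0 < i)%N by rewrite ord_gt0.
  have pr_max : pr i != ord_max by rewrite -ltn_ord_max val_pr; have := ltn_ord i; lia.
  have := f_spline _ _ pr_max (E_hub pr_max); rewrite last_label // val_pr prednK // => h_pr.
  have -> /= : f i - f (pr i) = (f i - f ord_max) - (f (pr i) - f ord_max).
    by rewrite opprB addrA subrK.
  apply: in_idealB h_pr; case: (eqVneq i ord_max) => [->|i_max].
    by rewrite subrr; apply: in_ideal0.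
  apply: in_ideal_dvd (f_spline _ _ i_max (E_hub i_max)); rewrite last_label // addnS.
  by apply: a_inc; move: i_max; rewrite -ltn_ord_max rrS; lia.
Qed.

End HubLast.

Theorem mainTheorem7 (m n : nat) (a : nat -> nat)
  (Hm : (1 < m)%N) (Hn : (2 <= n)%N)
  (Ha : forall s : nat, (1 <= s <= rr n)%N -> (1 < a s)%N /\ (a s %| m)%N) :
  ( (forall s : nat, (1 <= s < rr n)%N -> (a s.+1 %| a s)%N) ->
    (a 1%N %| m)%N -> m <> a 1%N ->
    min_flow_up_generating_set (@complete_graph n) a (@gens_decreasing m n a) /\
    min_flow_up_generating_set (@wheel_first n) a (@gens_decreasing m n a) /\
    min_flow_up_generating_set (@star_graph n 0) a (@gens_decreasing m n a) )
  /\
  ( (forall s : nat, (1 <= s < rr n)%N -> (a s %| a s.+1)%N) ->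
    (a (rr n) %| m)%N -> m <> a (rr n) ->
    min_flow_up_generating_set (@complete_graph n) a (@gens_increasing m n a) /\
    min_flow_up_generating_set (@wheel_last n) a (@gens_increasing m n a) /\
    min_flow_up_generating_set (@star_graph n n.-1) a (@gens_increasing m n a) ).
Proof.
case: n Hn Ha => [//|n] _ Ha.
have a_gt0 s : (0 < s <= rr n.+1)%N -> (0 < a s)%N by case/Ha => /ltnW.
split=> a_chain a_end_dvd /eqP a_end_neq.
  have hub_first (E : rel 'I_n.+1) : (forall j, j != ord0 -> E j ord0) ->
      min_flow_up_generating_set E a (@gens_decreasing m n.+1 a).
    exact: gens_decreasing_min.
  split; [|split]; apply: hub_first => j j0 //.
    by rewrite /wheel_first j0 /= orbT.
  by rewrite /star_graph j0 /= orbT.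
have hub_last (E : rel 'I_n.+1) : (forall j, j != ord_max -> E j ord_max) ->
    min_flow_up_generating_set E a (@gens_increasing m n.+1 a).
  exact: gens_increasing_min.
split; [|split]; apply: hub_last => j j0 //.
  by rewrite /wheel_last j0 /= eqxx orbT.
by rewrite /star_graph j0 /= eqxx orbT.
Qed.
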